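(* Let $R$ be a commutative ring with $1$ and let $(S,m)$ be a multiset in $R$ (a finite subset $S\subseteq R$ with multiplicities $m:S\to\{1,2,\dots\}$) such that $s-s^*$ is a unit of $R$ for all $s\ne s^*$ in $S$. Let $d(S)=\sum_{s\in S}m(s)$ and $t=d(S)-1$. Then there exist elements $\alpha(s,u)\in R$ for all $s\in S$ and $0\le u<m(s)$ such that for every integer $\ell\ge 0$, $$\sum_{s\in S}\sum_{0\le u<m(s)}\alpha(s,u)\binom{\ell}{u}s^{\ell-u}=\begin{cases}0&\text{if }\ell<t,\\1&\text{if }\ell=t.\end{cases}$$ (No condition is imposed for $\ell>t$.)
   Context: By convention, a term $\binom{\ell}{u}s^{\ell-u}$ with $u>\ell$ is $0$ (since $\binom{\ell}{u}=0$). *)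

From mathcomp Require Import all_boot all_order all_algebra.
Set Implicit Arguments. Unset Strict Implicit. Unset Printing Implicit Defensive.
Import GRing.Theory.
Local Open Scope ring_scope.

Definition multiset_in (R : comUnitRingType) (S : seq R) (m : R -> nat) : Prop :=
  uniq S /\ (forall s, s \in S -> (0 < m s)%N).

Definition degS (R : comUnitRingType) (S : seq R) (m : R -> nat) : nat :=
  (\sum_(s <- S) m s)%N.

(* The combination sum_{s in S} sum_{u < m(s)} alpha(s,u) C(l,u) s^(l-u);
   the term with u > l vanishes since C(l,u) = 0. *)
Definition comb (R : comUnitRingType) (S : seq R) (m : R -> nat)
  (alpha : R -> nat -> R) (l : nat) : R :=
  \sum_(s <- S) \sum_(u < m s) alpha s u * ('C(l, u))%:R * s ^+ (l - u).

From mathcomp Require Import all_boot all_order all_algebra.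
From mathcomp Require Import ring.
Import GRing.Theory.
Set Implicit Arguments.
Unset Strict Implicit.
Unset Printing Implicit Defensive.

Local Open Scope ring_scope.

(* Write E for the shift of sequences and pick s0 with
   m(s0) > 0.  The operator E - s0 maps the block of sequences
   l |-> sum_(u < k) a_u C(l,u) s^(l-u) to itself; for s = s0 it lowers the
   multiplicity by one, and for s <> s0 it acts on the coefficients by the
   unitriangular map a |-> (s - s0) a + (shifted a), which is invertible since
   s - s0 is a unit.  Hence any combination for (S, m) with m(s0) lowered is
   the image under E - s0 of a combination for (S, m); the kernel of E - s0
   contains s0^l, which adjusts the value at l = 0, and the Kronecker pattern
   then propagates through f(l+1) = s0 f(l) + (E - s0) f (l). *)

Section Sequences.
Variable R : pzRingType.

Definition shift_sub (c : R) (f : nat -> R) (l : nat) : R := f l.+1 - c * f l.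

Definition kronecker_prefix (f : nat -> R) (d : nat) : Prop :=
  forall l, ((l.+1 < d)%N -> f l = 0) /\ ((l.+1 = d)%N -> f l = 1).

Lemma kronecker_prefix_shift_sub c f g n :
  f 0%N = (n == 0%N)%:R -> (forall l, shift_sub c f l = g l) ->
  kronecker_prefix g n -> kronecker_prefix f n.+1.
Proof.
move=> f0 fg gn.
have fS l : f l.+1 = c * f l + g l by rewrite -fg /shift_sub addrC subrK.
have f_lt l : (l < n)%N -> f l = 0.
  elim: l => [|l IHl] ln; first by rewrite f0 gtn_eqF.
  by rewrite fS IHl ?(ltnW ln) // mulr0 add0r (proj1 (gn l)).
move=> l; split; first by rewrite ltnS => /f_lt.
case=> ->; case: n f0 f_lt gn => [|n] f0 f_lt gn //.
by rewrite fS f_lt // mulr0 add0r (proj2 (gn n)).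
Qed.

End Sequences.

Section ConfluentPowers.
Variable R : comPzRingType.

(* [comb S m alpha l] unfolds to [\sum_(s <- S) cpow s (m s) (alpha s) l]. *)
Definition cpow (s : R) (k : nat) (a : nat -> R) (l : nat) : R :=
  \sum_(u < k) a u * ('C(l, u))%:R * s ^+ (l - u).

Lemma cpow0 s a l : cpow s 0 a l = 0.
Proof. by rewrite /cpow big_ord0. Qed.

Lemma cpow_eq s k a b l :
  (forall u, (u < k)%N -> a u = b u) -> cpow s k a l = cpow s k b l.
Proof. by move=> ab; apply: eq_bigr => u _; rewrite ab. Qed.

Lemma cpowD s k a b l :
  cpow s k (fun u => a u + b u) l = cpow s k a l + cpow s k b l.
Proof. by rewrite /cpow -big_split; apply: eq_bigr => u _; rewrite !mulrDl. Qed.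

Lemma cpowZ s k c a l : cpow s k (fun u => c * a u) l = c * cpow s k a l.
Proof. by rewrite /cpow mulr_sumr; apply: eq_bigr => u _; rewrite !mulrA. Qed.

Lemma cpowSr_eq0 s k a l : a k = 0 -> cpow s k.+1 a l = cpow s k a l.
Proof. by move=> ak; rewrite /cpow big_ord_recr /= ak !mul0r addr0. Qed.

Lemma binom_pow0S (s : R) l :
  ('C(l.+1, 0))%:R * s ^+ (l.+1 - 0) = s * (('C(l, 0))%:R * s ^+ (l - 0)).
Proof. by rewrite !bin0 !subn0 exprS !mul1r. Qed.

Lemma binom_powSS (s : R) u l :
  ('C(l.+1, u.+1))%:R * s ^+ (l.+1 - u.+1)
  = s * (('C(l, u.+1))%:R * s ^+ (l - u.+1)) + ('C(l, u))%:R * s ^+ (l - u).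
Proof.
rewrite binS natrD mulrDl subSS; congr (_ + _).
have [ul | lu] := ltnP u l; first by rewrite -(subnSK ul) exprS mulrCA.
by rewrite bin_small ?ltnS // !mul0r mulr0.
Qed.

Lemma cpowSS s k a l :
  cpow s k.+1 a l.+1 = s * cpow s k.+1 a l + cpow s k (fun u => a u.+1) l.
Proof.
rewrite /cpow !big_ord_recl /= mulrDr -addrA; congr (_ + _).
  by rewrite -!mulrA binom_pow0S mulrCA.
rewrite mulr_sumr -big_split /=; apply: eq_bigr => u _.
by rewrite /bump /= !add1n -!mulrA binom_powSS mulrDr mulrCA.
Qed.

Lemma shift_sub_cpowS c s k a l :
  shift_sub c (cpow s k.+1 a) l
  = (s - c) * cpow s k.+1 a l + cpow s k (fun u => a u.+1) l.
Proof. by rewrite /shift_sub cpowSS; ring. Qed.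

Lemma shift_sub_cpow_root s k a l :
  shift_sub s (cpow s k.+1 a) l = cpow s k (fun u => a u.+1) l.
Proof. by rewrite shift_sub_cpowS subrr mul0r add0r. Qed.

Lemma shift_sub_cpow c s k a g l :
  a k = 0 -> (forall u, (u < k)%N -> (s - c) * a u + a u.+1 = g u) ->
  shift_sub c (cpow s k a) l = cpow s k g l.
Proof.
case: k => [|k] ak ag; first by rewrite /shift_sub !cpow0 mulr0 subr0.
rewrite shift_sub_cpowS -(@cpowSr_eq0 s k (fun u => a u.+1) l ak) -cpowZ -cpowD.
exact: cpow_eq.
Qed.

End ConfluentPowers.

Section BackSolve.
Variable R : unitRingType.

Fixpoint back_solve (c : R) (g : nat -> R) (k : nat) : nat -> R :=
  if k is k'.+1 then
    let b := back_solve c (fun u => g u.+1) k' in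
    fun u => if u is v.+1 then b v else c^-1 * (g 0%N - b 0%N)
  else fun _ => 0.

Lemma back_solve_last c g k : back_solve c g k k = 0.
Proof. by elim: k g => [|k IHk] g //=; rewrite IHk. Qed.

Lemma back_solveP c g k u : c \is a GRing.unit -> (u < k)%N ->
  c * back_solve c g k u + back_solve c g k u.+1 = g u.
Proof.
move=> cU; elim: k g u => [|k IHk] g [|u] //= uk; last exact: IHk.
by rewrite mulrA mulrV // mul1r subrK.
Qed.

End BackSolve.

Section Combinations.
Variable R : comUnitRingType.
Implicit Types (S : seq R) (m : R -> nat) (alpha : R -> nat -> R).

Definition dec_mult m (s0 s : R) : nat := if s == s0 then (m s).-1 else m s.

Lemma degS_dec_mult S m s0 : uniq S -> s0 \in S -> (0 < m s0)%N ->
  degS S m = (degS S (dec_mult m s0)).+1.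
Proof.
move=> Su s0S ms0; rewrite /degS !(bigD1_seq s0) //= /dec_mult eqxx.
rewrite -addSn prednK //; congr (_ + _)%N.
by apply: eq_bigr => s /negbTE ->.
Qed.

Lemma degS_gt0 S m : (0 < degS S m)%N -> exists2 s, s \in S & (0 < m s)%N.
Proof.
move=> dpos; apply/hasP; apply: contraTT dpos => /hasPn m0.
by rewrite -leqNgt leqn0 /degS big_seq big1 // => s /m0; rewrite lt0n negbK => /eqP.
Qed.

Lemma comb_shift_sub_preimage S m s0 alpha' :
  (forall s, s \in S -> s != s0 -> (s - s0) \is a GRing.unit) -> (0 < m s0)%N ->
  exists alpha, forall l,
    shift_sub s0 (comb S m alpha) l = comb S (dec_mult m s0) alpha' l.
Proof.
move=> unitS ms0.
exists (fun s => if s == s0 then fun u => if u is v.+1 then alpha' s0 v else 0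
                 else back_solve (s - s0) (alpha' s) (m s)) => l.
rewrite /shift_sub /comb mulr_sumr -sumrB; apply: eq_big_seq => s sS.
rewrite /dec_mult; case: eqVneq => [-> | s_s0].
  case: (m s0) ms0 => // k _.
  exact: (shift_sub_cpow_root s0 k (fun u => if u is v.+1 then alpha' s0 v else 0)).
apply: (shift_sub_cpow _ (back_solve_last _ _ _)) => u um.
exact: back_solveP (unitS s sS s_s0) um.
Qed.

Lemma comb_add_root S m s0 alpha c l : uniq S -> s0 \in S -> (0 < m s0)%N ->
  comb S m (fun s u => alpha s u + (if (s == s0) && (u == 0%N) then c else 0)) l
  = comb S m alpha l + c * s0 ^+ l.
Proof.
move=> Su s0S ms0; rewrite /comb.
rewrite [LHS](eq_bigr _ (fun s _ =>
  cpowD s (m s) (alpha s) (fun u => if (s == s0) && (u == 0%N) then c else 0) l)).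
rewrite big_split /=; congr (_ + _).
rewrite (bigD1_seq s0) //= big1 => [|s /negbTE ->]; last first.
  by rewrite /cpow big1 // => u _; rewrite !mul0r.
rewrite addr0 eqxx /cpow -(prednK ms0) big_ord_recl /= big1 => [|u _].
  by rewrite bin0 subn0 mulr1 addr0.
by rewrite !mul0r.
Qed.

Lemma comb_kronecker_prefix S : uniq S ->
  (forall s s', s \in S -> s' \in S -> s != s' -> (s - s') \is a GRing.unit) ->
  forall n m, degS S m = n -> exists alpha, kronecker_prefix (comb S m alpha) n.
Proof.
move=> Su unitS; elim=> [|n IHn] m dm; first by exists (fun _ _ => 0).
have [s0 s0S ms0] : exists2 s0, s0 \in S & (0 < m s0)%N by apply: degS_gt0; rewrite dm.
have [alpha' kr'] : exists alpha', kronecker_prefix (comb S (dec_mult m s0) alpha') n.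
  by apply: IHn; apply: succn_inj; rewrite -dm (degS_dec_mult Su s0S ms0).
have [alpha1 preim] := comb_shift_sub_preimage alpha' (fun s sS => unitS s s0 sS s0S) ms0.
pose c := (n == 0%N)%:R - comb S m alpha1 0%N.
exists (fun s u => alpha1 s u + (if (s == s0) && (u == 0%N) then c else 0)).
apply: (kronecker_prefix_shift_sub (c := s0) _ _ kr').
  by rewrite comb_add_root // expr0 mulr1 addrC subrK.
move=> l; rewrite -preim /shift_sub !comb_add_root // exprS; ring.
Qed.

End Combinations.

Theorem lemma4 (R : comUnitRingType) (S : seq R) (m : R -> nat) :
  multiset_in S m ->
  (forall s s', s \in S -> s' \in S -> s != s' -> (s - s') \is a GRing.unit) ->
  exists alpha : R -> nat -> R,
    forall l : nat,
      ((l.+1 < degS S m)%N -> comb S m alpha l = 0) /\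
      ((l.+1 = degS S m)%N -> comb S m alpha l = 1).
Proof. by move=> [Su _] unitS; exact: comb_kronecker_prefix. Qed.
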